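(* For every $n\in\mathbb{N}$ and every $k\in\{0,1,\dots,n\}$, $|B_{n,k}|=(n+1)^{n-1}$.
   Context: For $n\in\mathbb{N}$ let $[n]=\{1,\dots,n\}$ and $PP_n=[n]^n$. Given $\alpha=(a_1,\dots,a_n)\in PP_n$ and an integer $k\ge0$, park cars $c_1,\dots,c_n$ in order on a street whose spots are indexed by all integers, initially all empty, with the unrestricted $k$-Naples rule: car $c_i$ parks at $a_i$ if empty; otherwise it checks spots $a_i-1,a_i-2,\dots,a_i-k$ in this order (including spots numbered $\le 0$) and parks in the first empty one; if all are occupied it drives east and parks in the first empty spot numbered greater than $a_i$. The set $B_{n,k}$ of contained parking functions consists of those $\alpha\in PP_n$ for which, under this process, every car parks in a spot belonging to $[n]$ (equivalently: all cars park in spots $1,\dots,n$ and no car ever occupies spot $0$ or any spot outside $[n]$). *)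

From HB Require Import structures.
From mathcomp Require Import all_boot all_order all_algebra.
Set Implicit Arguments. Unset Strict Implicit. Unset Printing Implicit Defensive.
Import Order.TTheory GRing.Theory Num.Theory.
Local Open Scope ring_scope.

Fixpoint first_free_from (S : seq int) (fuel : nat) (b : int) : int :=
  match fuel with
  | 0%N => b
  | m.+1 => if b \in S then first_free_from S m (b + 1) else b
  end.

(* first empty spot numbered strictly greater than a; among the size S + 1
   consecutive spots a+1, ..., a+size S+1 at least one is empty *)
Definition next_free (S : seq int) (a : int) : int :=
  first_free_from S (size S).+1 (a + 1).

Definition back_free (k : nat) (S : seq int) (a : int) : option int :=
  let js := iota 1 k in
  let i := find (fun j : nat => (a - j%:Z) \notin S) js in
  if (i < k)%N then Some (a - (nth 0%N js i)%:Z) else None.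

Definition park_spot (k : nat) (S : seq int) (a : int) : int :=
  if a \notin S then a else
  match back_free k S a with
  | Some b => b
  | None => next_free S a
  end.

Fixpoint park_aux (k : nat) (S : seq int) (prefs : seq int) : seq int :=
  match prefs with
  | [::] => [::]
  | a :: p => let b := park_spot k S a in b :: park_aux k (b :: S) p
  end.

Definition parking (k : nat) (prefs : seq int) : seq int := park_aux k [::] prefs.

Definition contained (n k : nat) (prefs : seq int) : bool :=
  all (fun b : int => (0 < b) && (b <= n%:Z)) (parking k prefs).

(* B_{n,k}: preference lists in PP_n = [n]^n, encoded as n-tuples over 'I_n
   where the ordinal i stands for preference i+1. *)
Definition B_set (n k : nat) : {set n.-tuple 'I_n} :=
  [set alpha : n.-tuple 'I_n | contained n k [seq ((val i).+1)%:Z | i <- alpha]].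

From HB Require Import structures.
From mathcomp Require Import all_boot all_order all_algebra zify.
Set Implicit Arguments. Unset Strict Implicit. Unset Printing Implicit Defensive.
Import Order.TTheory GRing.Theory Num.Theory.
Local Open Scope ring_scope.

(* Every contained k-Naples parking function of length n arises from a unique
   circular one, and circular parking is counted by Pollak's rotation argument. Circular parking: the same rule (park at a, else look back at a-1, ...,
      a-k, else take the first free spot after a) is run on an arbitrary ring,
      where it commutes with translations.
   2. On the circle Z/(n+1), n cars occupy n distinct spots, so exactly one
      spot stays empty.  Rotating preferences rotates the empty spot, hence for
      every r the preference lists in (Z/(n+1))^n leaving r empty number
      (n+1)^n / (n+1) = (n+1)^(n-1).
   3. As long as the linear street stays within [1, n], every spot examined by
      the linear rule lies in [0, n+1], both ends of which are 0 on the circle;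
      so reducing modulo n+1 turns the linear run into the circular one, and a
      preference list in [n]^n is contained exactly when its circular run
      leaves 0 empty.  Preferences i+1 (i < n) are precisely the nonzero
      residues, which gives a bijection between B_{n,k} and that class. *)

(* The k-Naples rule on a street indexed by a ring R; when R = Z/(n+1) the
   street is a circle.  The definitions mirror those of the linear street. *)
Section CircularParking.
Variable R : pzRingType.
Implicit Types (T p : seq R) (a b r : R).

Fixpoint cfirst_free T (fuel : nat) b : R :=
  match fuel with
  | 0%N => b
  | f.+1 => if b \in T then cfirst_free T f (b + 1) else b
  end.

Definition cback_free (k : nat) T a : option R :=
  let js := iota 1 k in
  let i := find (fun j : nat => (a - j%:R) \notin T) js in
  if (i < k)%N then Some (a - (nth 0%N js i)%:R) else None.

Definition cpark_spot (k : nat) T a : R :=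
  if a \notin T then a else
  match cback_free k T a with
  | Some b => b
  | None => cfirst_free T (size T).+1 (a + 1)
  end.

Fixpoint cpark_aux (k : nat) T p : seq R :=
  match p with
  | [::] => [::]
  | a :: p' => let b := cpark_spot k T a in b :: cpark_aux k (b :: T) p'
  end.

Definition cparking (k : nat) p : seq R := cpark_aux k [::] p.

Lemma mem_shift T x r : (x + r \in map (+%R^~ r) T) = (x \in T).
Proof. exact/mem_map/addIr. Qed.

Lemma cfirst_free_shift T f b r :
  cfirst_free (map (+%R^~ r) T) f (b + r) = cfirst_free T f b + r.
Proof.
elim: f b => [|f IH] b //=; rewrite mem_shift; case: ifP => // _.
by rewrite -IH addrAC.
Qed.

Lemma cpark_spot_shift k T a r :
  cpark_spot k (map (+%R^~ r) T) (a + r) = cpark_spot k T a + r.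
Proof.
rewrite /cpark_spot mem_shift; case: ifP => // _.
have shiftE (j : nat) : (a + r - j%:R \notin map (+%R^~ r) T) = (a - j%:R \notin T).
  by rewrite addrAC mem_shift.
rewrite /cback_free size_map (eq_find shiftE); case: ifP => _; first by rewrite addrAC.
by rewrite addrAC cfirst_free_shift.
Qed.

Lemma cpark_aux_shift k T p r :
  cpark_aux k (map (+%R^~ r) T) (map (+%R^~ r) p) = map (+%R^~ r) (cpark_aux k T p).
Proof.
elim: p T => [|a p IH] T //=.
by rewrite cpark_spot_shift -IH.
Qed.

Lemma size_cpark_aux k T p : size (cpark_aux k T p) = size p.
Proof. by elim: p T => [|a p IH] T //=; rewrite IH. Qed.

Lemma cpark_aux_covers k T p x : x \in p -> (x \in T) || (x \in cpark_aux k T p).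
Proof.
elim: p T => [|a p IH] T //=; rewrite in_cons => /orP [/eqP ->|xp].
  rewrite /cpark_spot; case: ifP => [_|/negbFE -> //].
  by rewrite in_cons eqxx orbT.
have := IH (cpark_spot k T a :: T) xp; rewrite !in_cons.
by case/orP => [/orP [->|->]|->]; rewrite ?orbT.
Qed.

End CircularParking.

Section CircleOfSpots.
Variable m : nat.
Local Notation Zc := 'Z_(m.+2).
Implicit Types (T : seq Zc) (a b r : Zc).

Lemma val_natZ (j : nat) : val (j%:R : Zc) = (j %% m.+2)%N.
Proof. exact: (@val_Zp_nat m.+2 erefl j). Qed.

(* Going forward around a circle with a free spot, a free spot is reached
   within size T + 1 steps: the spots b, ..., b + size T are distinct. *)
Lemma cfirst_free_notin T b : (size T < m.+2)%N -> cfirst_free T (size T).+1 b \notin T.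
Proof.
move=> sizeT; apply/negP => inT.
have run_in (f : nat) c i : cfirst_free T f c \in T -> (i < f)%N -> c + i%:R \in T.
  elim: f c i => [|f IH] c i //=; case: ifP => [cT ffT|-> //].
  case: i => [_|i lt_if]; first by rewrite addr0.
  by rewrite mulrS addrA; apply: IH.
have run_uniq : uniq [seq b + i%:R | i <- iota 0 (size T).+1].
  rewrite map_inj_in_uniq ?iota_uniq // => i j; rewrite !mem_iota => ri rj /addrI.
  by move/(congr1 val); rewrite !val_natZ !modn_small //; lia.
have run_sub : {subset [seq b + i%:R | i <- iota 0 (size T).+1] <= T}.
  by move=> x /mapP [i]; rewrite mem_iota => ri ->; apply: run_in inT _; lia.
by have := uniq_leq_size run_uniq run_sub; rewrite size_map size_iota ltnn.
Qed.

Lemma cpark_spot_notin k T a : (size T < m.+2)%N -> cpark_spot k T a \notin T.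
Proof.
move=> sizeT; rewrite /cpark_spot; case: ifP => // _.
rewrite /cback_free; case: ifP => [found|_]; last exact: cfirst_free_notin.
have hasFree : has (fun j : nat => a - j%:R \notin T) (iota 1 k).
  by rewrite has_find size_iota.
exact: (nth_find 0%N hasFree).
Qed.

Lemma cpark_aux_fresh k T p : (size T + size p <= m.+2)%N ->
  uniq (cpark_aux k T p) && all [predC T] (cpark_aux k T p).
Proof.
elim: p T => [|a p IH] T //= sizeTp.
have newT := @cpark_spot_notin k T a ltac:(lia).
have /andP [uniq_rest fresh_rest] := IH (cpark_spot k T a :: T) ltac:(rewrite /=; lia).
rewrite uniq_rest newT /= andbT; apply/andP; split.
  by apply/negP => /(allP fresh_rest); rewrite /= in_cons eqxx.
by apply/allP => x /(allP fresh_rest); rewrite /= in_cons negb_or => /andP [].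
Qed.

Lemma one_empty_spot k (p : m.+1.-tuple Zc) : #|[pred r | r \notin cparking k p]| = 1%N.
Proof.
have room : (size (Nil Zc) + size p <= m.+2)%N by rewrite size_tuple.
have /andP [uniq_spots _] := cpark_aux_fresh k room.
have := cardC (mem (cparking k p)).
rewrite card_ord (card_uniqP uniq_spots) size_cpark_aux size_tuple.
by rewrite [Zp_trunc _]/Zp_trunc /=; set empty := #|_|; lia.
Qed.

Definition avoiding k r : {set m.+1.-tuple Zc} :=
  [set p : m.+1.-tuple Zc | r \notin cparking k p].

(* Rotating by r is a bijection from avoiding 0 onto avoiding r. *)
Lemma card_avoiding_shift k r : #|avoiding k r| = #|avoiding k 0|.
Proof.
pose rotate (p : m.+1.-tuple Zc) := map_tuple (+%R^~ r) p.
have rotate_inj : injective rotate.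
  by move=> p q /(congr1 val) /(inj_map (@addIr _ r)) /val_inj.
suff -> : avoiding k 0 = rotate @^-1: avoiding k r by rewrite card_preimset.
apply/setP => p; rewrite !inE /cparking /=.
by rewrite -[[::]]/(map (+%R^~ r) [::]) cpark_aux_shift /= -(mem_shift _ 0 r) add0r.
Qed.

(* Double counting: each preference list leaves exactly one spot empty. *)
Lemma sum_card_avoiding k : (\sum_(r : Zc) #|avoiding k r|)%N = (m.+2 ^ m.+1)%N.
Proof.
transitivity (\sum_(r : Zc) \sum_(p : m.+1.-tuple Zc) (r \notin cparking k p : nat))%N.
  apply: eq_bigr => r _; rewrite -sum1_card big_mkcond /=.
  by apply: eq_bigr => p _; rewrite inE; case: (_ \notin _).
rewrite exchange_big /= (eq_bigr (fun=> 1%N)) ?sum1_card ?card_tuple ?card_ord //.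
move=> p _; rewrite -(one_empty_spot k p) -sum1_card [RHS]big_mkcond /=.
by apply: eq_bigr => r _; rewrite inE; case: (_ \notin _).
Qed.

(* Pollak's count: all m+2 classes have the same size. *)
Lemma card_avoiding0 k : #|avoiding k 0| = (m.+2 ^ m)%N.
Proof.
have := sum_card_avoiding k.
rewrite (eq_bigr (fun=> #|avoiding k 0|)) => [|r _]; last exact: card_avoiding_shift.
by rewrite sum_nat_const card_ord expnS => /eqP; rewrite eqn_mul2l => /eqP.
Qed.

End CircleOfSpots.

Lemma find_iota_prefix (p : pred nat) (k t : nat) : (t <= k)%N ->
  ((t < k)%N -> has p (iota 1 t)) ->
  find p (iota 1 k) = find p (iota 1 t) /\
  ((find p (iota 1 k) < k)%N -> (find p (iota 1 k) < t)%N).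
Proof.
move=> le_tk hasp; have [-> //|ne_tk] := eqVneq t k.
have lt_tk : (t < k)%N by rewrite ltn_neqAle ne_tk.
have hasp_t := hasp lt_tk.
rewrite -(subnKC le_tk) iotaD find_cat hasp_t; split => //.
by move: hasp_t; rewrite has_find size_iota.
Qed.

Definition in_lot (n : nat) (b : int) : bool := (0 < b) && (b <= n%:Z).

Section LinearToCircular.
Variable m : nat.
Local Notation Zc := 'Z_(m.+2).
Implicit Types (S : seq int) (a b z : int).

Definition toZ z : Zc := z%:~R.

Lemma toZB x y : toZ (x - y) = toZ x - toZ y. Proof. exact: intrB. Qed.
Lemma toZD x y : toZ (x + y) = toZ x + toZ y. Proof. exact: intrD. Qed.

Lemma toZ_inj x y : 0 < x <= m.+1%:Z -> 0 <= y <= m.+2%:Z -> toZ x = toZ y -> x = y.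
Proof.
case: x => [x|x]; last lia; case: y => [y|y]; last lia.
move=> x_lot y_range /(congr1 val); rewrite /toZ /= !val_natZ modn_small; last lia.
have [lt_y|ge_y] := ltnP y m.+2; first by rewrite modn_small // => ->.
have -> : y = m.+2 by lia.
by rewrite modnn; lia.
Qed.

Lemma toZ_mem S b : all (in_lot m.+1) S -> 0 <= b <= m.+2%:Z ->
  (toZ b \in map toZ S) = (b \in S).
Proof.
move=> S_lot b_range; apply/mapP/idP => [[s sS eq_bs]|]; last by exists b.
have := allP S_lot s sS; rewrite /in_lot => s_lot.
have <- // : s = b by apply: toZ_inj (esym eq_bs); lia.
Qed.

(* The forward search reduces to the circular one and stays in [b, m+2]:
   it stops at the latest at m+2, which is never occupied. *)
Lemma first_free_toZ S f b : all (in_lot m.+1) S -> 0 <= b <= m.+2%:Z ->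
  toZ (first_free_from S f b) = cfirst_free (map toZ S) f (toZ b) /\
  b <= first_free_from S f b <= m.+2%:Z.
Proof.
move=> S_lot; elim: f b => [|f IH] b b_range /=; first by split=> //; lia.
rewrite toZ_mem //; case bS: (b \in S); last by split=> //; lia.
have := allP S_lot b bS; rewrite /in_lot => b_lot.
have [-> range_next] := IH (b + 1) ltac:(lia).
by rewrite toZD; split=> //; lia.
Qed.

(* The backward search reduces to the circular one and stays in [0, m+2]:
   it stops at the latest at spot 0, which is never occupied. *)
Lemma back_free_toZ k S a : all (in_lot m.+1) S -> in_lot m.+1 a ->
  cback_free k (map toZ S) (toZ a) = omap toZ (back_free k S a) /\
  (forall b, back_free k S a = Some b -> 0 <= b <= m.+2%:Z).
Proof.
move=> S_lot; case: a => [a|a]; rewrite /in_lot => a_lot; last lia.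
set p := fun j : nat => Posz a - j%:Z \notin S.
set q := fun j : nat => toZ a - j%:R \notin map toZ S.
have pq (j : nat) : (j <= a)%N -> p j = q j.
  by move=> le_ja; rewrite /p /q -(toZ_mem (b := Posz a - j%:Z)) ?toZB //; lia.
set t := minn k a.
have le_tk : (t <= k)%N by rewrite geq_minl.
have hasp : (t < k)%N -> has p (iota 1 t).
  move=> lt_tk; have t_a : t = a by rewrite /t; lia.
  apply/hasP; exists a; first by rewrite mem_iota t_a; lia.
  by rewrite /p subrr; apply/negP => /(allP S_lot); rewrite /in_lot; lia.
have hasq : (t < k)%N -> has q (iota 1 t).
  move=> /hasp; rewrite (@eq_in_has _ p q) // => j.
  by rewrite mem_iota => j_t; apply: pq; lia.
have [findp find_lt] := find_iota_prefix le_tk hasp.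
have [findq _] := find_iota_prefix le_tk hasq.
have findpq : find p (iota 1 k) = find q (iota 1 k).
  rewrite findp findq; apply: eq_in_find => j; rewrite mem_iota => j_t.
  by apply: pq; lia.
rewrite /cback_free /back_free -/p -/q -findpq; case: ifP => found /=; last by split.
have := find_lt found; rewrite nth_iota // => lt_t.
by split=> [|b [<-]]; [rewrite toZB | lia].
Qed.

Lemma park_spot_toZ k S a : all (in_lot m.+1) S -> in_lot m.+1 a ->
  toZ (park_spot k S a) = cpark_spot k (map toZ S) (toZ a) /\
  0 <= park_spot k S a <= m.+2%:Z.
Proof.
move=> S_lot a_lot; have := a_lot; rewrite /in_lot => a_range.
rewrite /park_spot /cpark_spot toZ_mem //; last lia.
case: (a \in S) => /=; last by split=> //; lia.
have [-> back_range] := back_free_toZ k S_lot a_lot.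
case: (back_free k S a) back_range => [b /(_ b erefl)|_] //=.
rewrite /next_free size_map -[toZ a + 1]/(toZ a + toZ 1) -toZD.
have [-> range_next] := first_free_toZ (size S).+1 S_lot (b := a + 1) ltac:(lia).
by split=> //; lia.
Qed.

(* All cars stay in [1, m+1] exactly when the circular run avoids 0, the
   reduction of both 0 and m+2. *)
Lemma park_aux_toZ k S p : all (in_lot m.+1) S -> all (in_lot m.+1) p ->
  all (in_lot m.+1) (park_aux k S p) = (0 \notin cpark_aux k (map toZ S) (map toZ p)).
Proof.
elim: p S => [|a p IH] S S_lot //= /andP [a_lot p_lot].
have [<- spot_range] := park_spot_toZ k S_lot a_lot.
rewrite in_cons negb_or; set b := park_spot k S a in spot_range *.
case b_lot: (in_lot m.+1 b) => /=.
  have -> : (0 != toZ b).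
    apply/eqP => /esym; rewrite -[0]/(toZ 0) => /toZ_inj; move: b_lot; rewrite /in_lot.
    by move=> b_lot /(_ ltac:(lia) ltac:(lia)); lia.
  by rewrite -(IH (b :: S)) //= b_lot.
suff -> : toZ b = 0 by [].
move: b_lot spot_range; rewrite /in_lot; case: b => [b|b] b_lot b_range; last lia.
have [-> // | ->] : b = 0%N \/ b = m.+2 by lia.
by apply: val_inj; rewrite -[toZ _]/((m.+2)%:R : Zc) val_natZ modnn.
Qed.

Definition succZ (i : 'I_m.+1) : Zc := (val i).+1%:R.

Lemma succZ_inj : injective succZ.
Proof.
move=> [i lt_im] [j lt_jm] /(congr1 val); rewrite !val_natZ /= !modn_small; try lia.
by move=> [eq_ij]; apply: val_inj.
Qed.

Lemma succZK (x : Zc) : x != 0 -> succZ (inord (val x).-1) = x.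
Proof.
case: x => x lt_x nz_x; have x_pos : (0 < x)%N.
  by rewrite lt0n; apply: contra nz_x => /eqP x0; apply/eqP/val_inj.
have lt_xm : (x < m.+2)%N by move: (lt_x); rewrite [Zp_trunc _]/Zp_trunc.
by apply: val_inj; rewrite val_natZ /= inordK ?prednK ?modn_small //; lia.
Qed.

Lemma contained_cparking k (prefs : seq 'I_m.+1) :
  contained m.+1 k [seq ((val i).+1)%:Z | i <- prefs] =
  (0 \notin cparking k (map succZ prefs)).
Proof.
rewrite /contained /parking (@park_aux_toZ k [::]) -?map_comp //.
by apply/allP => _ /mapP [[j lt_jm] _ ->]; rewrite /in_lot /=; lia.
Qed.

Lemma card_B_set_avoiding k : #|B_set m.+1 k| = #|avoiding k (0 : Zc)|.
Proof.
pose lift_prefs (prefs : m.+1.-tuple 'I_m.+1) := map_tuple succZ prefs.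
have lift_inj : injective lift_prefs.
  by move=> a b /(congr1 val) /(inj_map succZ_inj) /val_inj.
rewrite -(card_imset _ lift_inj); congr #|pred_of_set _|.
apply/setP => c; apply/imsetP/idP => [[a]|].
  by rewrite !inE contained_cparking => ? ->.
rewrite inE => c_avoids0.
have c_nz x : x \in c -> x != 0.
  move=> xc; apply: contraNneq c_avoids0 => <-.
  by have := cpark_aux_covers k [::] xc.
pose a := map_tuple (fun x : Zc => inord (val x).-1 : 'I_m.+1) c.
have lift_a : lift_prefs a = c.
  by apply: val_inj; rewrite /= -map_comp map_id_in // => x /c_nz /succZK.
by exists a; rewrite // inE contained_cparking -[map _ _]/(val (lift_prefs a)) lift_a.
Qed.

End LinearToCircular.

(* For n = 0 the only (empty) preference list is vacuously contained. *)
Theorem lemma3p3 (n k : nat) (hk : (k <= n)%N) :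
  #|B_set n k| = (n.+1 ^ n.-1)%N.
Proof.
case: n hk => [|m] _; last by rewrite card_B_set_avoiding card_avoiding0.
have -> : B_set 0 k = setT by apply/setP => -[[|x s] ?]; rewrite !inE.
by rewrite cardsT card_tuple.
Qed.
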